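(* Let $\mathcal{I}=(R,U,C,\omega)$ be an instance of Valued APEP such that $C$ is $t$-wbounded. Then there exists an optimal solution $A^*$ of $\mathcal{I}$ with $|A^*|\le t$.
   Context: $U$ is a finite set of users, $R$ a finite set of resources. An authorization relation is $A\subseteq U\times R$; $A(r)=\{u:(u,r)\in A\}$, $A(u)=\{r:(u,r)\in A\}$; $A$ is complete if $A(r)\neq\emptyset$ for all $r\in R$. A weighted constraint $c$ is a function $w_c:2^{U\times R}\to\mathbb{N}$ with $w_c(A)=0$ iff $A$ satisfies $c$. A weighted user authorization function is $\omega:U\times 2^R\to\mathbb{N}$ with $\omega(u,T')\le\omega(u,T)$ whenever $T'\subseteq T$, and $\omega(u,T)=0$ if $u$ is authorized for every resource of $T$. Put $\Omega(A)=\sum_{u\in U}\omega(u,A(u))$, $w_C(A)=\sum_{c\in C}w_c(A)$ and $w(A)=\Omega(A)+w_C(A)$. An instance of Valued APEP is $(R,U,C,\omega)$ with $C$ a set of weighted constraints; an optimal solution is a complete authorization relation $A$ with $w(A)\le w(A')$ for every complete authorization relation $A'$. $C$ is $t$-wbounded if for every complete authorization relation $A$ with $|A|>t$ there is a complete authorization relation $A'\subseteq A$ with $|A'|<|A|$ and $w_C(A')\le w_C(A)$. *)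

From mathcomp Require Import all_boot.
Set Implicit Arguments. Unset Strict Implicit. Unset Printing Implicit Defensive.

Section APEP.
Variables (U R : finType).

Definition authrel := {set U * R}.

Definition resources_of (A : authrel) (u : U) : {set R} :=
  [set r | (u, r) \in A].

Definition complete (A : authrel) : Prop :=
  forall r : R, exists u : U, (u, r) \in A.

Definition weighted_user_auth (auth : U -> R -> bool)
  (omega : U -> {set R} -> nat) : Prop :=
  (forall u (T' T : {set R}), T' \subset T -> omega u T' <= omega u T) /\
  (forall u (T : {set R}), (forall r, r \in T -> auth u r) -> omega u T = 0).

Definition Omega (omega : U -> {set R} -> nat) (A : authrel) : nat :=
  \sum_(u : U) omega u (resources_of A u).

Definition wC (I : finType) (C : I -> authrel -> nat) (A : authrel) : nat :=
  \sum_(c : I) C c A.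

Definition wtot (I : finType) (C : I -> authrel -> nat)
  (omega : U -> {set R} -> nat) (A : authrel) : nat :=
  Omega omega A + wC C A.

Definition optimal_solution (I : finType) (C : I -> authrel -> nat)
  (omega : U -> {set R} -> nat) (A : authrel) : Prop :=
  complete A /\
  forall A' : authrel, complete A' -> wtot C omega A <= wtot C omega A'.

Definition t_wbounded (I : finType) (C : I -> authrel -> nat) (t : nat) : Prop :=
  forall A : authrel, complete A -> t < #|A| ->
    exists A' : authrel, [/\ complete A', A' \subset A, #|A'| < #|A| &
                            wC C A' <= wC C A].

End APEP.

(* An optimal solution exists because there are finitely many authorization
   relations.  If an optimal A has more than t pairs, t-wboundedness gives a
   complete A' strictly inside A with w_C(A') <= w_C(A); since omega is
   monotone, Omega(A') <= Omega(A) as well, so A' is again optimal.  Repeating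
   this (induction on |A|) yields an optimal solution of size at most t. *)

From mathcomp Require Import all_boot.

Set Implicit Arguments.
Unset Strict Implicit.
Unset Printing Implicit Defensive.

Section ValuedAPEP.
Variables (U R I : finType) (C : I -> {set U * R} -> nat).
Variable omega : U -> {set R} -> nat.

Hypothesis omegaS :
  forall u (T' T : {set R}), T' \subset T -> omega u T' <= omega u T.

Lemma completeP (A : {set U * R}) :
  reflect (complete A) [forall r, [exists u, (u, r) \in A]].
Proof.
apply: (iffP forallP) => cA r; last exact/existsP.
by have /existsP := cA r.
Qed.

Lemma resources_ofS (A' A : {set U * R}) u :
  A' \subset A -> resources_of A' u \subset resources_of A u.
Proof. by move=> sA'A; apply/subsetP => r; rewrite !inE; apply: (subsetP sA'A). Qed.

Lemma OmegaS (A' A : {set U * R}) :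
  A' \subset A -> Omega omega A' <= Omega omega A.
Proof.
by move=> sA'A; apply: leq_sum => u _; apply/omegaS/resources_ofS.
Qed.

Lemma exists_optimal_solution :
  (exists A : {set U * R}, complete A) ->
  exists A : {set U * R}, optimal_solution C omega A.
Proof.
move=> [A0 /completeP cA0].
have [A /completeP cA minA] :=
  @arg_minnP _ A0 (fun A => [forall r, [exists u, (u, r) \in A]]) (wtot C omega) cA0.
by exists A; split=> // A' /completeP; apply: minA.
Qed.

Lemma optimal_solutionS (A' A : {set U * R}) :
  optimal_solution C omega A -> complete A' -> A' \subset A ->
  wC C A' <= wC C A -> optimal_solution C omega A'.
Proof.
move=> [_ minA] cA' sA'A leC; split=> // B cB.
by apply: leq_trans (minA B cB); rewrite leq_add // OmegaS.
Qed.

Lemma optimal_solution_small (t : nat) (A : {set U * R}) :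
  t_wbounded C t -> optimal_solution C omega A ->
  exists A' : {set U * R}, optimal_solution C omega A' /\ #|A'| <= t.
Proof.
move=> wb; elim: {A}_.+1 {-2}A (ltnSn #|A|) => // n IHn A ltAn optA.
case: (leqP #|A| t) => [|ltA]; first by exists A.
have [A' [cA' sA'A ltA'A leC]] := wb A optA.1 ltA.
apply: (IHn A'); first exact: leq_trans ltA'A ltAn.
exact: optimal_solutionS optA cA' sA'A leC.
Qed.

End ValuedAPEP.

Theorem lemma4p4 (U R : finType) (I : finType) (C : I -> {set U * R} -> nat)
  (auth : U -> R -> bool) (omega : U -> {set R} -> nat) (t : nat) :
  weighted_user_auth auth omega ->
  (exists A : {set U * R}, complete A) ->
  t_wbounded C t ->
  exists Astar : {set U * R}, optimal_solution C omega Astar /\ #|Astar| <= t.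
Proof.
move=> [omegaS _] /(exists_optimal_solution C omega) [A optA] wb.
exact: (optimal_solution_small omegaS wb optA).
Qed.
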